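(* Let $L$ be a finite-dimensional pure, nonnilpotent, solvable Lie algebra over $\mathbb{C}$ of breadth $2$ such that $\dim[L,L]=3$ and $\dim\big(L/Z(L)\big)=3$. Then $L$ has a basis $\{x_1,x_2,x_3,z\}$ in which the only nonzero brackets of basis elements (up to antisymmetry) are $[x_1,x_2]=x_2$, $[x_1,x_3]=-x_3$ and $[x_2,x_3]=z$.
   Context: For $x\in L$, the breadth of $x$ is $b(x)=\mathrm{rank}(\mathrm{ad}_x)$, and the breadth of $L$ is $b(L)=\max\{b(x)\mid x\in L\}$. A Lie algebra $L$ is pure (or stem) if it has no abelian ideal as a direct summand; equivalently $Z(L)\subseteq[L,L]$. $Z(L)$ denotes the center of $L$. *)

From HB Require Import structures.
From mathcomp Require Import all_boot all_order all_algebra.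
From mathcomp Require Import reals complex.
Set Implicit Arguments. Unset Strict Implicit. Unset Printing Implicit Defensive.
Import Order.TTheory GRing.Theory Num.Theory.
Local Open Scope ring_scope.


Section Lie.
Variables (F : fieldType) (L : vectType F) (br : L -> L -> L).

Definition is_lie_bracket : Prop :=
  [/\ (forall (a : F) (x y z : L), br (a *: x + y) z = a *: br x z + br y z),
      (forall (a : F) (x y z : L), br x (a *: y + z) = a *: br x y + br x z),
      (forall x : L, br x x = 0) &
      (forall x y z : L, br x (br y z) + br y (br z x) + br z (br x y) = 0)].

Definition lie_ad (x : L) : 'End(L) := linfun (br x).

(* [U, V] : the subspace spanned by all brackets [u, v], u in U, v in V
   (spanned by brackets of basis vectors, by bilinearity). *)
Definition lie_brs (U V : {vspace L}) : {vspace L} :=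
  (\sum_(u <- vbasis U) \sum_(v <- vbasis V) <[br u v]>)%VS.

Definition lie_derived : {vspace L} := lie_brs fullv fullv.

Definition lie_center : {vspace L} := lker (linfun lie_ad).

Fixpoint lie_derived_series (k : nat) : {vspace L} :=
  if k is k'.+1 then lie_brs (lie_derived_series k') (lie_derived_series k')
  else fullv.

Fixpoint lie_lower_central (k : nat) : {vspace L} :=
  if k is k'.+1 then lie_brs fullv (lie_lower_central k') else fullv.

Definition lie_solvable : Prop := exists k, lie_derived_series k = 0%VS :> {vspace L}.
Definition lie_nilpotent : Prop := exists k, lie_lower_central k = 0%VS :> {vspace L}.

Definition lie_pure : Prop := (lie_center <= lie_derived)%VS.

Definition lie_breadth_elt (x : L) : nat := \dim (limg (lie_ad x)).

Definition lie_breadth_eq (n : nat) : Prop :=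
  (forall x : L, (lie_breadth_elt x <= n)%N) /\ exists x : L, lie_breadth_elt x = n.

End Lie.

From HB Require Import structures.
From mathcomp Require Import all_boot all_order all_algebra.
From mathcomp Require Import reals complex.
Import Order.TTheory GRing.Theory Num.Theory.
Local Open Scope ring_scope.
Set Implicit Arguments. Unset Strict Implicit. Unset Printing Implicit Defensive.

(* Write Z for the centre and D for [L, L]; thus Z <= D, dim D = 3 and dim L/Z = 3.
   If a1, a2, a3 span L modulo Z, the brackets [a2,a3], [a3,a1], [a1,a2] span D,
   so they form a basis of D.  Choose the a_i adapted to the flag L > D > Z.
   If dim Z >= 2, then D <= <a3> + Z and the Jacobi identity gives
   [L,[L,L]] <= Z, so L is nilpotent; dim Z = 0 is excluded by solvability.
   If dim Z = 1, then D = <a2,a3> + Z and the Jacobi identity shows that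
   [a2,a3] is central and that ad a1 is traceless on U = <[a3,a1],[a1,a2]>.
   As ad a1 maps D, hence U, onto U, it is invertible on U, so it has
   eigenvalues +-mu with mu <> 0 and an eigenbasis x2, x3 of U.  Then
   a1/mu, x2, x3 span L modulo Z, and together with [x2,x3] they form the
   required basis. *)

Lemma linfunE_linear (F : fieldType) (aT rT : vectType F) (f : aT -> rT) :
  linear f -> linfun f =1 f.
Proof. by move=> f_lin; apply: (lfunE (HB.pack f (GRing.isLinear.Build _ _ _ _ f f_lin))). Qed.

Section PlaneLinearAlgebra.
Variables (F : fieldType) (V : vectType F).

Lemma free3_lincomb0 (u v w : V) (a b c : F) : free [:: u; v; w] ->
  a *: u + b *: v + c *: w = 0 -> [/\ a = 0, b = 0 & c = 0].
Proof.
move=> /freeP free_uvw comb0.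
pose k (i : 'I_3) := [:: a; b; c]`_i.
have k0 : forall i, k i = 0.
  by apply: free_uvw; rewrite !big_ord_recl big_ord0 addr0 addrA.
by split; [exact: (k0 0) | exact: (k0 1) | exact: (k0 2%:R)].
Qed.

Lemma span2_change (u v x y : V) (a b c d : F) :
  x = a *: u + b *: v -> y = c *: u + d *: v -> a * d - b * c != 0 ->
  (<<[:: x; y]>> = <<[:: u; v]>>)%VS.
Proof.
move=> ex ey det_neq0; have in_uv w : w \in [:: u; v] -> w \in <<[:: u; v]>>%VS.
  exact: memv_span.
have in_xy w : w \in [:: x; y] -> w \in <<[:: x; y]>>%VS.
  exact: memv_span.
apply/eqP; rewrite eqEsubv; apply/andP; split; apply/span_subvP => w.
  by rewrite !inE => /orP[] /eqP ->; rewrite ?ex ?ey rpredD ?rpredZ ?in_uv ?inE ?eqxx ?orbT.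
have e_u : d *: x - b *: y = (a * d - b * c) *: u.
  rewrite ex ey !scalerDr !scalerA opprD addrACA (mulrC d b) subrr addr0 -scalerBl.
  by rewrite (mulrC d a).
have e_v : a *: y - c *: x = (a * d - b * c) *: v.
  rewrite ex ey !scalerDr !scalerA opprD addrACA (mulrC a c) subrr add0r -scalerBl.
  by rewrite (mulrC c b).
have u_xy : u \in <<[:: x; y]>>%VS.
  rewrite -[u]scale1r -(mulVf det_neq0) -scalerA -e_u.
  by rewrite rpredZ // rpredB // rpredZ // in_xy // !inE eqxx ?orbT.
have v_xy : v \in <<[:: x; y]>>%VS.
  rewrite -[v]scale1r -(mulVf det_neq0) -scalerA -e_v.
  by rewrite rpredZ // rpredB // rpredZ // in_xy // !inE eqxx ?orbT.
by rewrite !inE => /orP[] /eqP ->.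
Qed.

End PlaneLinearAlgebra.

Section TracelessPlaneEndomorphism.
Variables (F : fieldType) (V : vectType F) (f : 'End(V)) (u v : V) (a b c : F).
Hypotheses (fu : f u = a *: u + b *: v) (fv : f v = c *: u - a *: v).
Let U := <<[:: u; v]>>%VS.
(* [delta] is minus the determinant of the traceless matrix of [f] on [U],
   so that [f \o f = delta] on [U] (Cayley-Hamilton). *)
Let delta := a ^+ 2 + b * c.

Lemma traceless_sqr w : w \in U -> f (f w) = delta *: w.
Proof.
have sqr_u : f (f u) = delta *: u.
  rewrite fu linearD !linearZ /= fu fv !scalerDr !scalerN !scalerA addrACA.
  by rewrite (mulrC b a) subrr addr0 -scalerDl /delta expr2.
have sqr_v : f (f v) = delta *: v.
  rewrite fv linearB !linearZ /= fu fv scalerN scalerBr !scalerDr !scalerA opprB addrAC addrCA.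
  by rewrite (mulrC c a) subrr addr0 -scalerDl /delta expr2 (mulrC c b).
have sqr_eq x : ((f \o f - delta *: \1)%VF x == 0) = (f (f x) == delta *: x).
  by rewrite add_lfunE opp_lfunE scale_lfunE comp_lfunE id_lfunE subr_eq0.
have : (U <= lker (f \o f - delta *: \1)%VF)%VS.
  by apply/span_subvP => x; rewrite !inE memv_ker sqr_eq => /orP[] /eqP ->; apply/eqP.
by move=> /subvP sub_ker /sub_ker; rewrite memv_ker sqr_eq => /eqP.
Qed.

Lemma traceless_det_neq0 : u != 0 -> (U <= f @: U)%VS -> delta != 0.
Proof.
move=> u_neq0 U_img; apply: contra u_neq0 => /eqP delta0.
have sqr0 : (f @: (f @: U) = 0)%VS.
  apply/eqP; rewrite -limg_comp -lkerE; apply/subvP => w /traceless_sqr.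
  by rewrite memv_ker comp_lfunE delta0 scale0r => ->.
have : (U <= 0)%VS by rewrite -sqr0 (subv_trans U_img) // limgS.
by rewrite -memv0 => /subvP; apply; rewrite memv_span // inE eqxx.
Qed.

Lemma traceless_cyclic : (2%:R : F) != 0 -> delta != 0 ->
  exists w, (<<[:: w; f w]>> = U)%VS.
Proof.
move=> two_neq0 delta_neq0.
have [b0|b_neq0] := eqVneq b 0; last first.
  exists u; apply: (span2_change (a := 1) (b := 0) (c := a) (d := b)) => //.
    by rewrite scale1r scale0r addr0.
  by rewrite mul1r mul0r subr0.
have [c0|c_neq0] := eqVneq c 0; last first.
  exists v; apply: (span2_change (a := 0) (b := 1) (c := c) (d := - a)).
  - by rewrite scale0r add0r scale1r.
  - by rewrite fv scaleNr.
  - by rewrite mul0r mul1r sub0r oppr_eq0.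
have a_neq0 : a != 0.
  by apply: contraNneq delta_neq0 => a0; rewrite /delta a0 b0 mul0r expr0n addr0.
exists (u + v); apply: (span2_change (a := 1) (b := 1) (c := a) (d := - a)).
- by rewrite !scale1r.
- by rewrite linearD /= fu fv b0 c0 !scale0r addr0 add0r scaleNr.
- by rewrite !mul1r -opprD oppr_eq0 -mulr2n -mulr_natr mulf_neq0.
Qed.

Lemma traceless_eigenbasis mu : (2%:R : F) != 0 -> mu != 0 -> mu ^+ 2 = delta ->
  exists x y, [/\ f x = mu *: x, f y = (- mu) *: y & <<[:: x; y]>>%VS = U].
Proof.
move=> two_neq0 mu_neq0 mu_sqr.
have [w span_w] : exists w, (<<[:: w; f w]>> = U)%VS.
  by apply: traceless_cyclic; rewrite // -mu_sqr expf_neq0.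
have w_U : w \in U by rewrite -span_w memv_span // inE eqxx.
have eigen m : m ^+ 2 = delta -> f (f w + m *: w) = m *: (f w + m *: w).
  move=> m_sqr; rewrite linearD linearZ /= traceless_sqr // -m_sqr.
  by rewrite scalerDr scalerA -expr2 addrC.
exists (f w + mu *: w), (f w + (- mu) *: w); split.
- exact: eigen.
- by apply: eigen; rewrite sqrrN.
- rewrite -span_w; apply: (span2_change (a := mu) (b := 1) (c := - mu) (d := 1)).
  + by rewrite scale1r addrC.
  + by rewrite scale1r addrC.
  + by rewrite mulr1 mul1r opprK -mulr2n -mulr_natr mulf_neq0.
Qed.

End TracelessPlaneEndomorphism.

Section LieBracket.
Variables (F : fieldType) (L : vectType F) (br : L -> L -> L).
Local Notation Z := (lie_center br).
Local Notation D := (lie_derived br).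

Lemma lie_derived_proper : lie_solvable br -> fullv != 0%VS :> {vspace L} -> D != fullv.
Proof.
move=> [k series0]; apply: contraNneq => D_full; rewrite -series0.
suff -> : lie_derived_series br k = fullv by [].
by elim: k {series0} => //= k ->.
Qed.

Lemma lie_center_generators : (Z <= D)%VS ->
  exists s t : seq L, [/\ fullv = (<<s ++ t>> + Z)%VS, D = (<<t>> + Z)%VS,
    size s = (\dim (fullv : {vspace L}) - \dim D)%N & size t = (\dim D - \dim Z)%N].
Proof.
move=> Z_D; have D_split : (D :\: Z + Z = D)%VS by rewrite addv_diff (addv_idPl Z_D).
exists (vbasis D^C), (vbasis (D :\: Z)).
rewrite span_cat !(span_basis (vbasisP _)) -addvA D_split addvC addv_complf !size_tuple.
by rewrite dimv_compl -(dimv_cap_compl D Z) (capv_idPr Z_D) addKn.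
Qed.

Hypothesis Hbr : is_lie_bracket br.

Lemma brDl x y z : br (x + y) z = br x z + br y z.
Proof. by case: Hbr => linl _ _ _; rewrite -[x]scale1r linl !scale1r. Qed.
Lemma brDr x y z : br z (x + y) = br z x + br z y.
Proof. by case: Hbr => _ linr _ _; rewrite -[x]scale1r linr !scale1r. Qed.
Lemma br0l x : br 0 x = 0.
Proof. by apply/eqP; rewrite -[X in X == _](addrK (br 0 x)) -brDl addr0 subrr. Qed.
Lemma br0r x : br x 0 = 0.
Proof. by apply/eqP; rewrite -[X in X == _](addrK (br x 0)) -brDr addr0 subrr. Qed.
Lemma brZl a x z : br (a *: x) z = a *: br x z.
Proof. by case: Hbr => linl _ _ _; rewrite -[a *: x]addr0 linl br0l addr0. Qed.
Lemma brZr a x z : br z (a *: x) = a *: br z x.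
Proof. by case: Hbr => _ linr _ _; rewrite -[a *: x]addr0 linr br0r addr0. Qed.
Lemma brNr x z : br z (- x) = - br z x.
Proof. by rewrite -scaleN1r brZr scaleN1r. Qed.
Lemma brxx x : br x x = 0.
Proof. by case: Hbr. Qed.
Lemma brC x y : br x y = - br y x.
Proof.
apply/eqP; rewrite -addr_eq0.
by have := brxx (x + y); rewrite brDl !brDr !brxx add0r addr0 => ->.
Qed.
Lemma jacobi x y z : br x (br y z) + br y (br z x) + br z (br x y) = 0.
Proof. by case: Hbr. Qed.

Lemma lie_adE x : lie_ad br x =1 br x.
Proof. by apply: linfunE_linear => a u v; rewrite brDr brZr. Qed.

Lemma lie_centerP z : reflect (forall x, br z x = 0) (z \in Z).
Proof.
have ad_linear : linear (lie_ad br).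
  by move=> a u v; apply/lfunP => w; rewrite !lfunE /= !lfunE /= !lie_adE brDl brZl.
rewrite memv_ker linfunE_linear //; apply: (iffP eqP) => [ad0 x | br0].
  by rewrite -lie_adE ad0 lfunE.
by apply/lfunP => x; rewrite lie_adE br0 lfunE.
Qed.

Lemma br_centerl z x : z \in Z -> br z x = 0.
Proof. by move/lie_centerP. Qed.
Lemma br_centerr z x : z \in Z -> br x z = 0.
Proof. by move/lie_centerP => z0; rewrite brC z0 oppr0. Qed.

Lemma br_modulo_center x d e : d - e \in Z -> br x d = br x e.
Proof. by move/(br_centerr x); rewrite brDr brNr => /subr0_eq. Qed.

Lemma br_span (s t : seq L) (W : {vspace L}) :
  {in s & t, forall x y, br x y \in W} ->
  {in <<s>>%VS & <<t>>%VS, forall u v, br u v \in W}.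
Proof.
have br_preim (X : seq L) x : {in X, forall y, br y x \in W} -> (<<X>> <= lie_ad br x @^-1: W)%VS.
  by move=> brXW; apply/span_subvP => y /brXW; rewrite -memv_preim lie_adE brC rpredN.
move=> brW u v su tv; have /subvP/(_ v tv) : (<<t>> <= lie_ad br u @^-1: W)%VS.
  apply: (br_preim) => y ty.
  have /subvP/(_ u su) : (<<s>> <= lie_ad br y @^-1: W)%VS.
    by apply: br_preim => x sx; apply: brW.
  by rewrite -memv_preim lie_adE.
by rewrite -memv_preim lie_adE.
Qed.

Lemma lie_brs_mem (U W : {vspace L}) u w : u \in U -> w \in W -> br u w \in lie_brs br U W.
Proof.
have span_vbasis (X : {vspace L}) : <<vbasis X>>%VS = X by apply/span_basis/vbasisP.
rewrite -{1}(span_vbasis U) -{1}(span_vbasis W); apply: br_span => x y x_U y_W.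
rewrite /lie_brs (big_rem _ x_U) (big_rem _ y_W) /= -addvA.
by apply: (subvP (addvSl _ _)); apply: memv_line.
Qed.

Lemma lie_brs_sub (U W X : {vspace L}) :
  {in U & W, forall u w, br u w \in X} -> (lie_brs br U W <= X)%VS.
Proof.
move=> brX; rewrite /lie_brs big_seq; elim/big_ind: _ => [|? ? ? ?|u u_U].
- exact: sub0v.
- by rewrite subv_add; apply/andP.
rewrite big_seq; elim/big_ind: _ => [|? ? ? ?|w w_W].
- exact: sub0v.
- by rewrite subv_add; apply/andP.
by rewrite -memvE brX // vbasis_mem.
Qed.

Lemma lie_derived_br u v : br u v \in D.
Proof. exact: lie_brs_mem (memvf u) (memvf v). Qed.

Lemma br_span_center (s t : seq L) (W : {vspace L}) :
  {in s & t, forall x y, br x y \in W} ->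
  {in (<<s>> + Z)%VS & (<<t>> + Z)%VS, forall u v, br u v \in W}.
Proof.
move=> brW u v /memv_addP[x sx [z z_Z ->]] /memv_addP[y ty [z' z'_Z ->]].
rewrite brDl (br_centerl _ z_Z) addr0 brDr (br_centerr _ z'_Z) addr0.
by apply: (br_span brW).
Qed.

Lemma lie_nilpotent_of_lower_central2 : (lie_lower_central br 2 <= Z)%VS -> lie_nilpotent br.
Proof.
move=> C2_Z; exists 3%N; apply/eqP; rewrite -subv0.
by apply: lie_brs_sub => u c _ /(subvP C2_Z) c_Z; rewrite br_centerr ?mem0v.
Qed.

Lemma lie_nilpotent_of_derived_central : (D <= Z)%VS -> lie_nilpotent br.
Proof.
move=> D_Z; apply: lie_nilpotent_of_lower_central2; apply: lie_brs_sub => u d _ d_D.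
by rewrite br_centerr ?mem0v ?(subvP D_Z).
Qed.

Lemma memv_line_center d a : d \in (<<[:: a]>> + Z)%VS -> exists m, d - m *: a \in Z.
Proof.
case/memv_addP => u; rewrite span_seq1 => /vlineP[m ->] [z z_Z ->].
by exists m; rewrite addrC addKr.
Qed.

Lemma memv_plane_center d a a' :
  d \in (<<[:: a; a']>> + Z)%VS -> exists p q, d - (p *: a + q *: a') \in Z.
Proof.
case/memv_addP => u; rewrite span_cons span_seq1 => /memv_addP[v /vlineP[p ->]].
by case=> w /vlineP[q ->] -> [z z_Z ->]; exists p, q; rewrite addrC addKr.
Qed.

Section GeneratorsModuloCenter.
Variables a1 a2 a3 : L.
Hypothesis span_a : fullv = (<<[:: a1; a2; a3]>> + Z)%VS.
Local Notation b1 := (br a2 a3).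
Local Notation b2 := (br a3 a1).
Local Notation b3 := (br a1 a2).

Lemma lie_derived_span : D = <<[:: b1; b2; b3]>>%VS.
Proof.
apply/eqP; rewrite eqEsubv; apply/andP; split; last first.
  by apply/span_subvP => x; rewrite !inE => /or3P[]/eqP->; apply: lie_derived_br.
apply: lie_brs_sub => u v _ _.
apply: (br_span_center (s := [:: a1; a2; a3]) (t := [:: a1; a2; a3])); rewrite -?span_a ?memvf //.
move=> x y; rewrite !inE => /or3P[]/eqP-> /or3P[]/eqP->; rewrite ?brxx ?mem0v //.
all: rewrite ?[br a2 a1]brC ?[br a3 a2]brC ?[br a1 a3]brC ?rpredN.
all: by rewrite memv_span // !inE eqxx ?orbT.
Qed.

Lemma lie_derived_free : \dim D = 3%N -> free [:: b1; b2; b3].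
Proof. by move=> dimD; rewrite /free -lie_derived_span dimD. Qed.

Lemma lie_nilpotent_of_derived_line :
  \dim D = 3%N -> (D <= <<[:: a3]>> + Z)%VS -> lie_nilpotent br.
Proof.
move=> dimD D_line; have free_b := lie_derived_free dimD.
have coef d : d \in D -> exists m, d - m *: a3 \in Z.
  by move/(subvP D_line)/memv_line_center.
have ad x d m : d - m *: a3 \in Z -> br x d = m *: br x a3.
  by move/(br_modulo_center x) ->; rewrite brZr.
have [m1 b1_m] := coef _ (lie_derived_br a2 a3).
have [m2 b2_m] := coef _ (lie_derived_br a3 a1).
have [m3 b3_m] := coef _ (lie_derived_br a1 a2).
have jacobi_m : m2 *: b1 + (- m1) *: b2 + 0 *: b3 = 0.
  rewrite scale0r addr0 scaleNr -(jacobi a1 a2 a3).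
  by rewrite (ad _ _ _ b1_m) (ad _ _ _ b2_m) (ad _ _ _ b3_m) brxx scaler0 addr0 (brC a1 a3) scalerN addrC.
have [m2_0 m1N_0 _] := free3_lincomb0 free_b jacobi_m.
have m1_0 : m1 = 0 by apply/eqP; rewrite -oppr_eq0 m1N_0.
have b1_Z : b1 \in Z by move: b1_m; rewrite m1_0 scale0r subr0.
have b2_Z : b2 \in Z by move: b2_m; rewrite m2_0 scale0r subr0.
apply: lie_nilpotent_of_lower_central2; apply: lie_brs_sub => u d _ d_D.
apply: (br_span_center (s := [:: a1; a2; a3]) (t := [:: a3])); rewrite -?span_a ?memvf ?(subvP D_line) //.
by move=> x y; rewrite !inE => /or3P[]/eqP-> /eqP->; rewrite ?brxx ?mem0v // brC rpredN.
Qed.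

Lemma generators_basis : \dim D = 3%N -> \dim Z = 1%N -> \dim (fullv : {vspace L}) = 4%N ->
  b1 \in Z -> basis_of fullv [:: a1; a2; a3; b1].
Proof.
move=> dimD dimZ dimL b1_Z.
have b1_neq0 : b1 != 0 by rewrite (free_not0 (lie_derived_free dimD)) // inE eqxx.
have Z_b1 : Z = <[b1]>%VS.
  by apply/eqP; rewrite eq_sym eqEdim -memvE b1_Z dim_vline b1_neq0 dimZ.
rewrite basisEdim dimL andbT -[[:: a1; a2; a3; b1]]/([:: a1; a2; a3] ++ [:: b1]).
by rewrite span_cat span_seq1 -Z_b1 -span_a.
Qed.

Section DerivedPlane.
Hypotheses (dimD : \dim D = 3%N) (D_plane : D = (<<[:: a2; a3]>> + Z)%VS).

Lemma plane_center_traceless :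
  b1 \in Z /\ exists p q r, br a1 b2 = p *: b2 + q *: b3 /\ br a1 b3 = r *: b2 - p *: b3.
Proof.
have coef d : d \in D -> exists p q, d - (p *: a2 + q *: a3) \in Z.
  by rewrite D_plane => /memv_plane_center.
have ad x d p q : d - (p *: a2 + q *: a3) \in Z -> br x d = p *: br x a2 + q *: br x a3.
  by move/(br_modulo_center x) ->; rewrite brDr !brZr.
have [p1 [q1 b1_pq]] := coef _ (lie_derived_br a2 a3).
have [p2 [q2 b2_pq]] := coef _ (lie_derived_br a3 a1).
have [p3 [q3 b3_pq]] := coef _ (lie_derived_br a1 a2).
have jacobi_pq : (q2 - p3) *: b1 + (- q1) *: b2 + p1 *: b3 = 0.
  rewrite -(jacobi a1 a2 a3) (ad _ _ _ _ b1_pq) (ad _ _ _ _ b2_pq) (ad _ _ _ _ b3_pq).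
  rewrite !brxx !scaler0 addr0 add0r (brC a1 a3) (brC a3 a2) !scalerN scalerBl scaleNr.
  by rewrite [LHS]addrC !addrA [LHS]addrAC (addrAC (p1 *: b3)).
have [trace0 q1N_0 p1_0] := free3_lincomb0 (lie_derived_free dimD) jacobi_pq.
have q1_0 : q1 = 0 by apply/eqP; rewrite -oppr_eq0 q1N_0.
split; first by move: b1_pq; rewrite p1_0 q1_0 !scale0r addr0 subr0.
exists (- q2), p2, (- q3); rewrite (ad _ _ _ _ b2_pq) (ad _ _ _ _ b3_pq) (brC a1 a3) !scalerN.
by rewrite !scaleNr opprK (subr0_eq trace0); split; rewrite addrC.
Qed.

Lemma plane_sub : (<<[:: a2; a3]>> <= D)%VS.
Proof. by rewrite D_plane addvSl. Qed.

Lemma plane_derived_br d e : d \in D -> e \in D -> br d e \in Z.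
Proof.
have b1_Z := plane_center_traceless.1; rewrite D_plane; apply: br_span_center.
by move=> x y; rewrite !inE => /orP[]/eqP-> /orP[]/eqP->; rewrite ?brxx ?mem0v // brC rpredN.
Qed.

Lemma plane_image : (<<[:: b2; b3]>> <= lie_ad br a1 @: <<[:: b2; b3]>>)%VS.
Proof.
have b1_Z := plane_center_traceless.1; set U := <<[:: b2; b3]>>%VS.
have img d : d \in D -> br a1 d \in (lie_ad br a1 @: U)%VS.
  rewrite lie_derived_span span_cons => /memv_addP[_ /vlineP[k ->] [w w_U ->]].
  by rewrite (br_modulo_center a1 (e := w)) ?addrK ?rpredZ // -lie_adE memv_img.
have a_D a : a \in [:: a2; a3] -> a \in D by move/memv_span/(subvP plane_sub).
apply/span_subvP => x; rewrite !inE => /orP[]/eqP->.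
  by rewrite brC -brNr img // rpredN a_D // !inE eqxx orbT.
by rewrite img // a_D // inE eqxx.
Qed.

Lemma plane_normal_generators :
  (forall c : F, exists mu, mu ^+ 2 = c) -> (2%:R : F) != 0 ->
  exists x1 x2 x3, [/\ fullv = (<<[:: x1; x2; x3]>> + Z)%VS,
    br x1 x2 = x2, br x1 x3 = - x3 & br x2 x3 \in Z].
Proof.
move=> sqrt two_neq0; have [b1_Z [p [q [r [ad_b2 ad_b3]]]]] := plane_center_traceless.
have f_b2 : lie_ad br a1 b2 = p *: b2 + q *: b3 by rewrite lie_adE.
have f_b3 : lie_ad br a1 b3 = r *: b2 - p *: b3 by rewrite lie_adE.
have delta_neq0 : p ^+ 2 + q * r != 0.
  apply: (traceless_det_neq0 f_b2 f_b3 _ plane_image).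
  by rewrite (free_not0 (lie_derived_free dimD)) // !inE eqxx orbT.
have [mu mu_sqr] := sqrt (p ^+ 2 + q * r).
have mu_neq0 : mu != 0 by apply: contraNneq delta_neq0 => mu0; rewrite -mu_sqr mu0 expr0n.
have [x2 [x3 [f_x2 f_x3 span_x]]] := traceless_eigenbasis f_b2 f_b3 two_neq0 mu_neq0 mu_sqr.
have U_D : (<<[:: x2; x3]>> <= D)%VS.
  by rewrite span_x lie_derived_span (span_cons b1) addvSr.
exists (mu^-1 *: a1), x2, x3; split.
- apply/eqP; rewrite eqEsubv subvf span_a subv_add addvSr !andbT.
  have D_x : (D <= <<[:: mu^-1 *: a1; x2; x3]>> + Z)%VS.
    rewrite lie_derived_span span_cons -span_x subv_add -memvE (subvP (addvSr _ _)) //=.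
    by apply: (subv_trans _ (addvSl _ _)); rewrite (span_cons (mu^-1 *: a1)) addvSr.
  apply/span_subvP => a; rewrite !inE => /or3P[]/eqP->.
  + rewrite -{1}(scalerKV mu_neq0 a1) rpredZ // (subvP (addvSl _ _)) //.
    by rewrite memv_span // inE eqxx.
  + by rewrite (subvP D_x) // (subvP plane_sub) // memv_span // inE eqxx.
  + by rewrite (subvP D_x) // (subvP plane_sub) // memv_span // !inE eqxx orbT.
- by rewrite brZl -lie_adE f_x2 scalerA mulVf // scale1r.
- by rewrite brZl -lie_adE f_x3 scalerA mulrN mulVf // scaleN1r.
- by rewrite plane_derived_br // (subvP U_D) // memv_span // !inE eqxx ?orbT.
Qed.

End DerivedPlane.

End GeneratorsModuloCenter.

End LieBracket.

Lemma lie_normal_form (F : fieldType) (L : vectType F) (br : L -> L -> L) :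
  (forall c : F, exists mu, mu ^+ 2 = c) -> (2%:R : F) != 0 ->
  is_lie_bracket br -> lie_pure br -> ~ lie_nilpotent br -> lie_solvable br ->
  \dim (lie_derived br) = 3%N ->
  (\dim (fullv : {vspace L}) - \dim (lie_center br))%N = 3%N ->
  exists x1 x2 x3 z : L,
    [/\ basis_of fullv [:: x1; x2; x3; z],
        br x1 x2 = x2, br x1 x3 = - x3, br x2 x3 = z &
        [/\ br x1 z = 0, br x2 z = 0 & br x3 z = 0]].
Proof.
move=> sqrt two_neq0 Hbr Z_D not_nilpotent solvable dimD dimLZ.
set Z := lie_center br in Z_D dimLZ *; set D := lie_derived br in Z_D dimD *.
have dimL : \dim (fullv : {vspace L}) = (\dim Z + 3)%N.
  by rewrite -dimLZ subnKC // dimvS // subvf.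
have D_proper : D != fullv.
  by apply: (lie_derived_proper solvable); rewrite -dimv_eq0 dimL addnC.
have dimZ_gt0 : (0 < \dim Z)%N.
  by rewrite lt0n; apply: contraNneq D_proper => dimZ0; rewrite eqEdim subvf dimD dimL dimZ0.
have dimZ_le3 : (\dim Z <= 3)%N by rewrite -dimD dimvS.
have [s [t [span_st D_t size_s size_t]]] := lie_center_generators Z_D.
rewrite dimL dimD addnK in size_s; rewrite dimD -size_s in size_t dimZ_gt0 dimZ_le3.
case: s span_st size_s size_t dimZ_gt0 dimZ_le3 => [|a1 [|a2 [|a3 [|? ?]]]] //.
- case: t D_t => [|a2 [|a3 []]] // D_plane span_a dimZ _ _ _.
  have [x1 [x2 [x3 [span_x x12 x13 x23_Z]]]] :=
    plane_normal_generators Hbr span_a dimD D_plane sqrt two_neq0.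
  exists x1, x2, x3, (br x2 x3); split=> //.
  + by apply: (generators_basis Hbr span_x dimD (esym dimZ)) x23_Z; rewrite dimL -dimZ.
  + by split; apply: br_centerr.
- case: t D_t => [|a3 []] // D_line span_a _ _ _ _.
  case: not_nilpotent; apply: (lie_nilpotent_of_derived_line Hbr span_a dimD).
  by rewrite D_line subvv.
- case: t D_t => // D_Z _ _ _ _ _.
  case: not_nilpotent; apply: (lie_nilpotent_of_derived_central Hbr).
  by rewrite D_Z span_nil add0v subvv.
Qed.

Unset Implicit Arguments.

Theorem theorem3p2 (R : realType) (L : vectType R[i]) (br : L -> L -> L) :
  is_lie_bracket br ->
  lie_pure br ->
  ~ lie_nilpotent br ->
  lie_solvable br ->
  lie_breadth_eq br 2 ->
  \dim (lie_derived br) = 3%N ->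
  (\dim (fullv : {vspace L}) - \dim (lie_center br))%N = 3%N ->
  exists x1 x2 x3 z : L,
    [/\ basis_of fullv [:: x1; x2; x3; z],
        br x1 x2 = x2, br x1 x3 = - x3, br x2 x3 = z &
        [/\ br x1 z = 0, br x2 z = 0 & br x3 z = 0]].
Proof.
move=> Hbr pure not_nilpotent solvable _; apply: lie_normal_form => //.
- by move=> c; exists (sqrtC c); rewrite sqrtCK.
- by rewrite pnatr_eq0.
Qed.
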